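(* Let $\pi$ be uniform on $\mathrm{PF}_n$ and $f$ uniform on $\widetilde{\mathcal F}_n$. Then the species $\mu(\pi)$ and $\mu(f)$ have the same distribution. Consequently the number of inversions $\#\{(i,j):i<j,\ g(i)>g(j)\}$ has the same distribution for $g=\pi$ and $g=f$.
   Context: A parking function of length $n$ is a sequence $(\pi_1,\dots,\pi_n)$ with $1\le\pi_i\le n$ such that $\#\{t:\pi_t\le i\}\ge i$ for all $1\le i\le n$; $\mathrm{PF}_n$ denotes the set of these. $\widetilde{\mathcal F}_n$ is the set of all functions $g:[n]\to[n+1]$. For $g\in\widetilde{\mathcal F}_n$ and $0\le i\le n$, let $\mu_i(g)$ be the number of values $v\in[n+1]$ with $\#\{t:g(t)=v\}=i$; the species of $g$ is $\mu(g)=(\mu_0(g),\mu_1(g),\dots,\mu_n(g))$. *)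

From HB Require Import structures.
From mathcomp Require Import all_boot all_order all_algebra.
Set Implicit Arguments. Unset Strict Implicit. Unset Printing Implicit Defensive.

(* Convention: a function g : [n] -> [n+1] is encoded as
   g : {ffun 'I_n -> 'I_n.+1}, where position t : 'I_n stands for t+1
   and value v : 'I_n.+1 stands for v+1. *)
Definition funF (n : nat) := {ffun 'I_n -> 'I_n.+1}.

(* Parking functions: 1 <= pi_t <= n, and #{t : pi_t <= i} >= i for 1 <= i <= n.
   In the 0-based encoding pi_t <= i becomes (g t < i). *)
Definition is_parking (n : nat) (g : funF n) : bool :=
  [forall t : 'I_n, (g t : nat) < n] &&
  [forall i : 'I_n.+1, (0 < i) ==> (i <= #|[set t : 'I_n | (g t : nat) < i]|)].

Definition PF (n : nat) : {set funF n} := [set g | is_parking g].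

Definition mu_i (n : nat) (g : funF n) (i : nat) : nat :=
  #|[set v : 'I_n.+1 | #|[set t : 'I_n | g t == v]| == i]|.

Definition species (n : nat) (g : funF n) : seq nat := mkseq (mu_i g) n.+1.

Definition inversions (n : nat) (g : funF n) : nat :=
  #|[set p : 'I_n * 'I_n | (p.1 < p.2) && (g p.2 < g p.1)]|.

Definition unif_prob (T : finType) (A : {set T}) (E : pred T) : rat :=
  (#|[set x in A | E x]|%:R / #|A|%:R)%R.

From HB Require Import structures.
From mathcomp Require Import all_boot all_order all_algebra.
From mathcomp Require Import zify.
Set Implicit Arguments. Unset Strict Implicit. Unset Printing Implicit Defensive.
Import GRing.Theory Num.Theory.

(* Pollak's circle argument: for every f : [n] -> [n+1] exactly one cyclic shift
   f - a (mod n+1) of its values is a parking function, and being a parking function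
   depends only on the fibre sizes.  On the other hand [rot_fun] is a bijection of
   functions that preserves inversions and moves the fibre over v to v + 1.  So the
   a-th iterate of [rot_fun] maps the parking functions onto the functions whose
   shift by a is parking, and every class of functions closed under [rot_fun] -- a
   species, or an inversion number -- contains n+1 times as many functions as
   parking functions. *)

Fixpoint inv_seq (s : seq nat) : nat :=
  if s is x :: s' then count (fun y => y < x) s' + inv_seq s' else 0.

Fixpoint fill (m : nat) (b : seq bool) (u : seq nat) : seq nat :=
  if b is x :: b' then
    if x then m :: fill m b' u else head 0 u :: fill m b' (behead u)
  else [::].

Fixpoint pair_count (x y : bool) (b : seq bool) : nat :=
  if b is z :: b' then (if z == x then count_mem y b' else 0) + pair_count x y b'
  else 0.

Lemma pair_count_rcons x y b z :
  pair_count x y (rcons b z) = pair_count x y b + (if z == y then count_mem x b else 0).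
Proof.
elim: b => [|z' b IH] /=; first by rewrite !if_same.
by rewrite IH -cats1 count_cat /=; case: (z' == x); case: (z == y) => /=; lia.
Qed.

Lemma pair_count_rev x y b : pair_count x y (rev b) = pair_count y x b.
Proof.
by elim: b => [|z b IH] //=; rewrite rev_cons pair_count_rcons IH count_rev addnC.
Qed.

Lemma count_fill m (b : seq bool) u (p : pred nat) : size u = count_mem false b ->
  count p (fill m b u) = count_mem true b * p m + count p u.
Proof.
elim: b u => [|[] b IH] u /=; first by case: u.
  by move=> Hs; rewrite IH // mulnDl mul1n addnA.
by case: u => [|x u] //= [Hs]; rewrite IH ?add0n // addnCA.
Qed.

Lemma size_fill m b u : size (fill m b u) = size b.
Proof. by elim: b u => [|[] b IH] u //=; rewrite IH. Qed.

Lemma all_fill m (b : seq bool) u (p : pred nat) : size u = count_mem false b ->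
  p m -> all p u -> all p (fill m b u).
Proof.
elim: b u => [|[] b IH] u //=; first by move=> Hs pm pu; rewrite pm IH.
by case: u => [|x u] //= [Hs] pm /andP[px pu]; rewrite px IH ?add0n.
Qed.

Lemma map_pred1_fill m (b : seq bool) u : size u = count_mem false b -> all (predC1 m) u ->
  map (pred1 m) (fill m b u) = b.
Proof.
elim: b u => [|[] b IH] u /=; first by case: u.
  by move=> Hs Hu; rewrite eqxx IH.
by case: u => [|x u] //= [Hs] /andP[/negbTE-> Hu]; rewrite IH ?add0n.
Qed.

Lemma filter_predC1_fill m b u : size u = count_mem false b -> all (predC1 m) u ->
  filter (predC1 m) (fill m b u) = u.
Proof.
elim: b u => [|[] b IH] u /=; first by case: u.
  by move=> Hs Hu; rewrite eqxx IH.
by case: u => [|x u] //= [Hs] /andP[-> Hu]; rewrite IH ?add0n.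
Qed.

Lemma fill_pred1 N s : fill N (map (pred1 N) s) (filter (predC1 N) s) = s.
Proof. by elim: s => //= x s IH; case: eqP => [->|_] /=; rewrite IH. Qed.

Lemma inv_seq_map_mono f u : {mono f : x y / x < y} -> inv_seq (map f u) = inv_seq u.
Proof.
move=> mono_f; elim: u => //= x u ->; rewrite count_map.
by congr (_ + _); apply: eq_count => y /=; rewrite mono_f.
Qed.

Lemma inv_fill_below m (b : seq bool) u : size u = count_mem false b -> all (leq m.+1) u ->
  inv_seq (fill m b u) = inv_seq u + pair_count false true b.
Proof.
elim: b u => [|[] b IH] u /=; first by case: u.
  move=> Hs Hu; rewrite IH // count_fill // ltnn muln0 add0n.
  have /eq_in_count-> : {in u, (fun y => y < m) =1 pred0}.
    by move=> y /(allP Hu) /ltnW; rewrite leqNgt => /negbTE.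
  by rewrite count_pred0.
case: u => [|x u] //= [Hs] /andP[Hx Hu].
rewrite IH ?add0n // count_fill // Hx muln1 [_ + count _ u]addnC -!addnA.
congr (_ + _); exact: addnCA.
Qed.

Lemma inv_fill_above m (b : seq bool) u : size u = count_mem false b -> all (gtn m) u ->
  inv_seq (fill m b u) = inv_seq u + pair_count true false b.
Proof.
elim: b u => [|[] b IH] u /=; first by case: u.
  move=> Hs Hu; rewrite IH // count_fill // ltnn muln0 add0n.
  by move: Hu; rewrite all_count => /eqP->; rewrite Hs; lia.
case: u => [|x u] //= [Hs] /andP[Hx Hu].
by rewrite IH ?add0n // count_fill // ltnNge (ltnW Hx) muln0; lia.
Qed.

(* The maximal letter [N] becomes [0] and every other letter is incremented.
   Reversing the pattern of positions of [N] turns the pairs (N, smaller letter)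
   into pairs (larger letter, 0) in equal number, so inversions are preserved. *)
Definition rot_values (N : nat) (s : seq nat) : seq nat :=
  fill 0 (rev (map (pred1 N) s)) (map succn (filter (predC1 N) s)).

Lemma size_filter_predC1 (T : eqType) (N : T) (s : seq T) :
  size (filter (predC1 N) s) = count_mem false (map (pred1 N) s).
Proof. by rewrite size_filter count_map; apply: eq_count => x /=; rewrite eqbF_neg. Qed.

Lemma size_rot_values_rest N (s : seq nat) :
  size (map succn (filter (predC1 N) s)) = count_mem false (rev (map (pred1 N) s)).
Proof. by rewrite size_map count_rev size_filter_predC1. Qed.

Lemma size_rot_values N s : size (rot_values N s) = size s.
Proof. by rewrite size_fill size_rev size_map. Qed.

Lemma all_succn_rest N s : all (leq 1) (map succn (filter (predC1 N) s)).
Proof. by apply/allP=> y /mapP[x _ ->]. Qed.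

Lemma inv_rot_values N s : all (geq N) s -> inv_seq (rot_values N s) = inv_seq s.
Proof.
move=> leN; rewrite inv_fill_below ?size_rot_values_rest ?all_succn_rest //.
rewrite inv_seq_map_mono; last by [].
rewrite pair_count_rev -{3}(fill_pred1 N s) inv_fill_above ?size_filter_predC1 //.
apply/allP=> x; rewrite mem_filter => /andP[xN xs].
by move: xN; rewrite /= ltn_neqAle => ->; apply: (allP leN).
Qed.

Lemma count_rot_values0 N s : count_mem 0 (rot_values N s) = count_mem N s.
Proof.
rewrite count_fill ?size_rot_values_rest // count_rev !count_map /= muln1.
rewrite (@eq_count _ (preim succn _) pred0) // count_pred0 addn0.
by apply: eq_count => x /=; rewrite eqb_id.
Qed.

Lemma count_rot_valuesS N s v : v < N -> count_mem v.+1 (rot_values N s) = count_mem v s.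
Proof.
move=> ltvN; rewrite count_fill ?size_rot_values_rest // muln0 add0n count_map count_filter.
by apply: eq_count => x /=; rewrite eqSS; case: eqP => // ->; rewrite neq_ltn ltvN.
Qed.

Lemma all_rot_values N s : all (geq N) s -> all (geq N) (rot_values N s).
Proof.
move=> leN; apply: all_fill; rewrite ?size_rot_values_rest //.
apply/allP=> y /mapP[x]; rewrite mem_filter => /andP[xN xs] ->.
by move: xN; rewrite /= ltn_neqAle => ->; apply: (allP leN).
Qed.

Lemma rot_values_inj N : injective (rot_values N).
Proof.
move=> s s' eq_rot.
have rest_neq0 t : all (predC1 0) (map succn (filter (predC1 N) t)).
  by apply/allP=> _ /mapP[x _ ->].
have := map_pred1_fill (size_rot_values_rest N s) (rest_neq0 s).
have := filter_predC1_fill (size_rot_values_rest N s) (rest_neq0 s).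
rewrite -[fill _ _ _]/(rot_values N s) eq_rot.
rewrite filter_predC1_fill ?map_pred1_fill ?size_rot_values_rest //.
move=> /(inj_map succn_inj) eq_rest /(can_inj revK) eq_mask.
by rewrite -(fill_pred1 N s) -(fill_pred1 N s') eq_mask eq_rest.
Qed.

Lemma card_set_sum (T : finType) (P : pred T) : #|[set x | P x]| = \sum_x P x.
Proof. by rewrite -sum1dep_card big_mkcond; apply: eq_bigr => x _; case: (P x). Qed.

Lemma count_nth_sum (s : seq nat) (a : pred nat) :
  count a s = \sum_(i < size s) a (nth 0 s i).
Proof. by elim: s => [|x s IH] /=; rewrite ?big_ord0 // big_ord_recl IH. Qed.

Lemma inv_seqE s : inv_seq s =
  \sum_(i < size s) \sum_(j < size s) ((i < j) && (nth 0 s j < nth 0 s i)).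
Proof.
elim: s => [|x s IH] /=; first by rewrite big_ord0.
rewrite big_ord_recl big_ord_recl /= add0n count_nth_sum IH; congr (_ + _).
by apply: eq_bigr => i _; rewrite big_ord_recl.
Qed.

Lemma below_cyclic_sub N a x i : x < N -> a + i <= N ->
  ((if a <= x then x - a else x + N - a) < i) + (x < a) = (x < a + i) :> nat.
Proof. by move=> ? ?; case: (leqP a x) => ?; do 3?[case: ltnP => ? /=]; lia. Qed.

Lemma below_cyclic_sub_wrap N a x i : x < N -> a < N -> i <= N -> N <= a + i ->
  ((if a <= x then x - a else x + N - a) < i) + (x < a) = 1 + (x < a + i - N) :> nat.
Proof. by move=> ? ? ? ?; case: (leqP a x) => ?; do 3?[case: ltnP => ? /=]; lia. Qed.

Lemma first_minimizer (T : nat -> nat) N :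
  exists2 a, a <= N & (forall x, x <= N -> T a <= T x) /\ (forall x, x < a -> T a < T x).
Proof.
have [a0 _ min_a0] := @arg_minnP _ (@ord0 N) predT (fun x => T x) isT.
have ex_a0 : exists x, (x <= N) && (T x == T a0) by exists a0; rewrite -ltnS ltn_ord eqxx.
case: (ex_minnP ex_a0) => a /andP[le_aN /eqP Ta] first_a.
have min_a x : x <= N -> T a <= T x.
  by move=> le_xN; rewrite Ta -[x](@inordK N) //; apply: min_a0.
exists a => //; split=> // x lt_xa.
have le_xN : x <= N := leq_trans (ltnW lt_xa) le_aN.
rewrite ltn_neqAle min_a // andbT; apply/eqP => Tax.
by have := first_a x; rewrite le_xN -Tax Ta eqxx leqNgt lt_xa => /(_ isT).
Qed.

Section Functions.
Variable n : nat.
Implicit Types (f g h : funF n) (a v : 'I_n.+1).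

Definition word g : seq nat := [seq val (g t) | t <- enum 'I_n].

Lemma size_word g : size (word g) = n.
Proof. by rewrite size_map size_enum_ord. Qed.

Lemma nth_word g (t : 'I_n) : nth 0 (word g) t = g t.
Proof. by rewrite (nth_map t) ?size_enum_ord // nth_ord_enum. Qed.

Lemma word_le g : all (geq n) (word g).
Proof. by apply/allP=> _ /mapP[t _ ->]; rewrite /= -ltnS. Qed.

Lemma word_inj : injective word.
Proof.
move=> g h eq_gh; apply/ffunP=> t; apply/val_inj.
by have := congr1 (nth 0 ^~ t) eq_gh; rewrite /= !nth_word.
Qed.

Lemma count_word g (p : pred nat) : count p (word g) = #|[set t | p (g t)]|.
Proof.
rewrite count_nth_sum card_set_sum size_word.
by apply: eq_bigr => t _; rewrite nth_word.
Qed.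

Lemma inversions_word g : inversions g = inv_seq (word g).
Proof.
rewrite /inversions card_set_sum inv_seqE size_word.
rewrite -(pair_bigA _ (fun i j : 'I_n => ((i < j) && (g j < g i) : nat))).
by apply: eq_bigr => i _; apply: eq_bigr => j _; rewrite !nth_word.
Qed.

Definition rot_fun g : funF n := [ffun t : 'I_n => inord (nth 0 (rot_values n (word g)) t)].

Lemma word_rot_fun g : word (rot_fun g) = rot_values n (word g).
Proof.
apply: (@eq_from_nth _ 0); rewrite ?size_rot_values !size_word // => i ltin.
rewrite -[i]/(val (Ordinal ltin)) nth_word ffunE inordK // ltnS.
by apply: (allP (all_rot_values (word_le g))); rewrite mem_nth ?size_rot_values ?size_word.
Qed.

Lemma rot_fun_inj : injective rot_fun.
Proof.
by move=> g h eq_rot; apply/word_inj/(@rot_values_inj n); rewrite -!word_rot_fun eq_rot.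
Qed.

Lemma inversions_rot_fun g : inversions (rot_fun g) = inversions g.
Proof. by rewrite !inversions_word word_rot_fun inv_rot_values ?word_le. Qed.

Definition fiber g v : nat := #|[set t | g t == v]|.

Lemma ord_top_val v : n <= v -> val v = n.
Proof. by move=> lenv; apply/eqP; rewrite eqn_leq lenv -ltnS ltn_ord. Qed.

Lemma val_addZp1 v : val (v + Zp1)%R = if v < n then v.+1 else 0.
Proof.
rewrite /= modnDmr addn1; case: ltnP => [ltvn|lenv]; first by rewrite modn_small.
by rewrite ord_top_val ?modnn.
Qed.

Lemma fiber_word g v : fiber g v = count_mem (val v) (word g).
Proof. by rewrite count_word; apply: eq_card => t; rewrite !inE. Qed.

Lemma fiber_rot_fun g v : fiber (rot_fun g) (v + Zp1)%R = fiber g v.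
Proof.
rewrite !fiber_word word_rot_fun val_addZp1; case: ltnP => [|lenv].
  exact: count_rot_valuesS.
by rewrite ord_top_val ?count_rot_values0.
Qed.

Lemma Zp1_mulrn a : (Zp1 *+ a)%R = a.
Proof. by apply: val_inj; rewrite Zp_mulrn /= modnMml mul1n modn_small. Qed.

Lemma iter_rot_fun_inj k : injective (iter k rot_fun).
Proof. by elim: k => [|k IH] g h //= /rot_fun_inj /IH. Qed.

Lemma fiber_iter_rot_fun k g v : fiber (iter k rot_fun g) (v + Zp1 *+ k)%R = fiber g v.
Proof. by elim: k => [|k IH] /=; rewrite ?addr0 // mulrSr addrA fiber_rot_fun. Qed.

Lemma card_preim_fiber g (p : pred 'I_n.+1) :
  #|[set t | p (g t)]| = \sum_(v | p v) fiber g v.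
Proof.
rewrite -sum1dep_card (partition_big g p) //=; apply: eq_bigr => v pv.
by rewrite sum1dep_card; apply: eq_card => t; rewrite !inE andb_idl // => /eqP->.
Qed.

Definition card_below f x : nat := #|[set t | (f t : nat) < x]|.

Lemma is_parkingE g :
  is_parking g = [forall i : 'I_n.+1, (0 < i) ==> (i <= card_below g i)].
Proof.
apply/andb_idl => /forallP park; apply/forallP=> t.
have full : [set t | (g t : nat) < n] = [set: 'I_n].
  apply/eqP; rewrite eqEcard subsetT cardsT card_ord.
  by have /implyP := park ord_max; apply; apply: leq_ltn_trans (ltn_ord t).
by have := in_setT t; rewrite -full inE.
Qed.

Lemma eq_fiber_parking g h : fiber g =1 fiber h -> is_parking g = is_parking h.
Proof.
move=> eq_gh; rewrite !is_parkingE; apply: eq_forallb => i.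
rewrite /card_below !(card_preim_fiber _ (fun v : 'I_n.+1 => v < i)).
by under eq_bigr do rewrite eq_gh.
Qed.

Lemma eq_fiber_shift_species g h a :
  (forall v, fiber h (v + a)%R = fiber g v) -> species h = species g.
Proof.
move=> eq_gh; apply: eq_mkseq => i.
rewrite /mu_i !card_set_sum (reindex_inj (addIr a)) /=; apply: eq_bigr => v _.
by rewrite -[#|_|]/(fiber h _) -[#|[set t | g t == v]|]/(fiber g v) eq_gh.
Qed.

Definition shift_fun f a : funF n := [ffun t => f t - a]%R.

Lemma fiber_shift_fun f a v : fiber (shift_fun f a) v = fiber f (v + a)%R.
Proof. by apply: eq_card => t; rewrite !inE ffunE subr_eq. Qed.

Lemma val_subZp x a : val (x - a)%R = if a <= x then x - a else x + n.+1 - a.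
Proof.
have := ltn_ord x; have := ltn_ord a; rewrite /= modnDmr; case: (leqP a x) => ? ? ?.
  by rewrite (_ : x + _ = x - a + n.+1) ?modnDr ?modn_small; lia.
by rewrite modn_small; lia.
Qed.

Lemma card_below_shift f a i : a + i <= n.+1 ->
  card_below (shift_fun f a) i + card_below f a = card_below f (a + i).
Proof.
move=> le_ai; rewrite /card_below !card_set_sum -big_split; apply: eq_bigr => t _.
by rewrite ffunE val_subZp; apply: below_cyclic_sub.
Qed.

Lemma card_below_shift_wrap f a i : i <= n.+1 -> n.+1 <= a + i ->
  card_below (shift_fun f a) i + card_below f a = n + card_below f (a + i - n.+1).
Proof.
move=> le_i le_ai; rewrite /card_below !card_set_sum -big_split.
rewrite -[n in n + _]card_ord -sum1_card -big_split; apply: eq_bigr => t _.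
by rewrite ffunE val_subZp; apply: below_cyclic_sub_wrap.
Qed.

Lemma card_below0 f : card_below f 0 = 0.
Proof. by apply: eq_card0 => t; rewrite inE. Qed.

Lemma card_below_top f : card_below f n.+1 = n.
Proof. by rewrite -[RHS]card_ord; apply: eq_card => t; rewrite inE ltn_ord. Qed.

Lemma card_below_le f x : card_below f x <= n.
Proof. by rewrite -[n in _ <= n]card_ord max_card. Qed.

Lemma species_rot_fun g : species (rot_fun g) = species g.
Proof. exact: eq_fiber_shift_species (fiber_rot_fun g). Qed.

Lemma parking_card_below g k : is_parking g -> 0 < k <= n -> k <= card_below g k.
Proof.
rewrite is_parkingE => /forallP park /andP[k_gt0 le_kn].
by have /implyP := park (inord k); rewrite inordK ?ltnS //; apply.
Qed.

Lemma shift_parking_unique f a b :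
  is_parking (shift_fun f a) -> is_parking (shift_fun f b) -> a = b.
Proof.
wlog lt_ab : a b / a < b.
  move=> wlog_ab pa pb; case: (ltngtP a b) => [lt_ab|lt_ba|/val_inj //].
    exact: wlog_ab.
  by apply/esym/wlog_ab.
move=> pa pb; have := ltn_ord b.
have := parking_card_below pa (k := b - a).
have := parking_card_below pb (k := n.+1 - (b - a)).
have := card_below_shift f (a := a) (i := b - a); rewrite subnKC ?(ltnW lt_ab) //.
have := card_below_shift_wrap f (a := b) (i := n.+1 - (b - a)).
rewrite (_ : b + _ - n.+1 = a); last by have := ltn_ord b; lia.
by have := card_below_le f a; have := card_below_le f b; lia.
Qed.

(* Shift by the first minimiser of [#{t | f t < x} - x]. *)
Lemma shift_parking_exists f : exists a, is_parking (shift_fun f a).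
Proof.
pose T x := card_below f x + n.+1 - x.
have [a le_an [min_a first_a]] := first_minimizer T n.
have lt_an : a < n.+1 := le_an.
exists (Ordinal lt_an); rewrite is_parkingE; apply/forallP=> i; apply/implyP=> i_gt0.
have le_in : i <= n by rewrite -ltnS.
have := card_below_le f a; have := card_below_le f (a + i).
case: (leqP (a + i) n.+1) => [le_ai | lt_ai].
  have /= := card_below_shift f (a := Ordinal lt_an) le_ai.
  suff : T a <= T (a + i) by rewrite /T; lia.
  case: (leqP (a + i) n) => [/min_a //| lt_ai_n].
  have := first_a 0; rewrite /T card_below0 (_ : a + i = n.+1) ?card_below_top; lia.
have /= := card_below_shift_wrap f (a := Ordinal lt_an) (ltnW (ltn_ord i)) (ltnW lt_ai).
have := first_a (a + i - n.+1); rewrite /T; lia.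
Qed.

Lemma card_shift_parking f : #|[set a | is_parking (shift_fun f a)]| = 1.
Proof.
have [a pa] := shift_parking_exists f; rewrite -(cards1 a).
apply: eq_card => b; rewrite !inE; apply/idP/eqP=> [pb|->//].
exact: shift_parking_unique pb pa.
Qed.

Lemma card_partition_parking_shift (P : pred (funF n)) :
  #|[set f | P f]| = \sum_a #|[set f | is_parking (shift_fun f a) && P f]|.
Proof.
rewrite card_set_sum; under [RHS]eq_bigr do rewrite card_set_sum.
rewrite exchange_big; apply: eq_bigr => f _; case: (P f) => /=.
  by under eq_bigr do rewrite andbT; rewrite -card_set_sum card_shift_parking.
by rewrite big1 // => a _; rewrite andbF.
Qed.

Section RotInvariant.
Variable P : pred (funF n).
Hypothesis P_rot : forall g, P (rot_fun g) = P g.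

Lemma card_shift_parking_rot_invariant a :
  #|[set f | is_parking (shift_fun f a) && P f]| = #|[set g | is_parking g && P g]|.
Proof.
rewrite -(card_preimset _ (@iter_rot_fun_inj a)); apply: eq_card => g; rewrite !inE.
have -> : P (iter a rot_fun g) = P g by elim: (val a) => //= k IH; rewrite P_rot.
congr andb; apply: eq_fiber_parking => v.
by rewrite fiber_shift_fun -{2}(Zp1_mulrn a) fiber_iter_rot_fun.
Qed.

Lemma card_rot_invariant :
  #|[set f | P f]| = n.+1 * #|[set g | is_parking g && P g]|.
Proof.
rewrite card_partition_parking_shift.
under eq_bigr do rewrite card_shift_parking_rot_invariant.
by rewrite sum_nat_const card_ord.
Qed.

End RotInvariant.

Lemma unif_prob_rot_invariant (P : pred (funF n)) :
  (forall g, P (rot_fun g) = P g) -> unif_prob (PF n) P = unif_prob [set: funF n] P.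
Proof.
have card_all (Q : pred (funF n)) : (forall g, Q (rot_fun g) = Q g) ->
    #|[set g in [set: funF n] | Q g]| = n.+1 * #|[set g in PF n | Q g]|.
  move=> Q_rot; transitivity #|[set g | Q g]|; first by apply: eq_card => g; rewrite !inE.
  by rewrite card_rot_invariant //; congr (_ * _); apply: eq_card => g; rewrite !inE.
have cardT : #|[set: funF n]| = n.+1 * #|PF n|.
  transitivity #|[set g in [set: funF n] | predT g]|.
    by apply: eq_card => g; rewrite !inE.
  by rewrite card_all //; congr (_ * _); apply: eq_card => g; rewrite !inE andbT.
move=> P_rot; rewrite /unif_prob card_all // cardT.
by rewrite !natrM -mulf_div divff ?mul1r // pnatr_eq0.
Qed.

End Functions.

Theorem mainTheorem16 (n : nat) :
  (forall m : seq nat,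
     unif_prob (PF n) (fun g => species g == m) =
     unif_prob [set: funF n] (fun g => species g == m)) /\
  (forall k : nat,
     unif_prob (PF n) (fun g => inversions g == k) =
     unif_prob [set: funF n] (fun g => inversions g == k)).
Proof.
split=> [m|k]; apply: unif_prob_rot_invariant => g.
  by rewrite species_rot_fun.
by rewrite inversions_rot_fun.
Qed.
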